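(* Let $M\ge2$ and let $\mathbb{F}=\sum_{j,l=1}^M|j,l\rangle\langle l,j|$ be the flip operator on $\mathbb{R}^M\otimes\mathbb{R}^M$. The matrix $$P=\mathbb{1}-\mathbb{F}+\mathbb{F}^{T_1}=\mathbb{1}+\sum_{\gamma<0}G_\gamma\otimes G_\gamma$$ is positive semidefinite, satisfies $\langle\psi|P|\psi\rangle=1$ for all normalized real product vectors $\psi=a\otimes b$ ($a,b\in\mathbb{R}^M$, $\|a\|=\|b\|=1$), and has $\mathrm{rank}(P)=1+(M^2-M)/2$. For $M=2,3$ this rank is the smallest possible among real positive semidefinite matrices $P'$ on $\mathbb{R}^M\otimes\mathbb{R}^M$ satisfying $\langle\psi|P'|\psi\rangle=1$ for all normalized real product vectors $\psi$.
   Context: $\mathbb{F}^{T_1}$ denotes the partial transpose of $\mathbb{F}$ on the first factor (standard basis). $\{G_\gamma\}_{\gamma<0}$ is a basis of the real antisymmetric $M\times M$ matrices, orthogonal w.r.t. $(X,Y)\mapsto\mathrm{tr}[XY^T]$ and normalized by $\mathrm{tr}[G_\gamma G_\gamma^T]=2$ (e.g. the matrices $E_{ab}-E_{ba}$, $a<b$, with $E_{ab}$ the matrix units); it has $M(M-1)/2$ elements. *)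

From HB Require Import structures.
From mathcomp Require Import all_boot all_order all_algebra.
From mathcomp Require Import mxtens.
From mathcomp Require Import reals.
Set Implicit Arguments. Unset Strict Implicit. Unset Printing Implicit Defensive.
Import Order.TTheory GRing.Theory Num.Theory.
Local Open Scope ring_scope.

(* Matrices on R^M (x) R^M are 'M[R]_(M * M), with the Kronecker product
   A *t B (mxtens.tensmx); basis vector |j,l> has index mxtens_index (j, l). *)

Definition flip (R : nzRingType) (M : nat) : 'M[R]_(M * M) :=
  \sum_(j < M) \sum_(l < M) (delta_mx j l *t delta_mx l j).

(* Partial transpose on the first tensor factor (standard basis):
   X^{T_1}_{(i,j),(k,l)} = X_{(k,j),(i,l)} *)
Definition ptrans1 (R : Type) (M : nat) (X : 'M[R]_(M * M)) : 'M[R]_(M * M) :=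
  \matrix_(r, c)
    X (mxtens_index ((mxtens_unindex c).1, (mxtens_unindex r).2))
      (mxtens_index ((mxtens_unindex r).1, (mxtens_unindex c).2)).

Definition Pmat (R : nzRingType) (M : nat) : 'M[R]_(M * M) :=
  1%:M - flip R M + ptrans1 (flip R M).

Definition psdmx (R : numDomainType) (n : nat) (A : 'M[R]_n) : Prop :=
  A^T = A /\ forall x : 'cV[R]_n, 0 <= (x^T *m A *m x) ord0 ord0.

Definition unit_on_products (R : nzRingType) (M : nat) (X : 'M[R]_(M * M)) : Prop :=
  forall a b : 'cV[R]_M, a^T *m a = 1%:M -> b^T *m b = 1%:M ->
    (a *t b)^T *m X *m (a *t b) = 1%:M.

From HB Require Import structures.
From mathcomp Require Import all_boot all_order all_algebra.
From mathcomp Require Import mxtens.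
From mathcomp Require Import reals.
From mathcomp Require Import ring lra.
Set Implicit Arguments. Unset Strict Implicit. Unset Printing Implicit Defensive.
Import Order.TTheory GRing.Theory Num.Theory.
Local Open Scope ring_scope.

(* The flip F is the permutation matrix of |j,l> |-> |l,j>, so A = (1 - F)/2 is the
   orthogonal projector onto the antisymmetric tensors, of trace (M^2 - M)/2, while
   F^{T_1} = Phi Phi^T for the symmetric vector Phi = sum_j |j,j>, which A kills.  Hence
   P = 2 A + Phi Phi^T is positive semidefinite of rank tr A + 1, and on a product vector
   <a b|P|a b> = |a|^2 |b|^2 - <a,b>^2 + <a,b>^2.  The vectorized G_gamma are tr A
   orthogonal antisymmetric vectors of squared norm 2, so they span the range of A and
   sum_gamma vec G_gamma (vec G_gamma)^T = 2 A; realigning the indices of this identity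
   gives sum_gamma G_gamma (x) G_gamma = P - 1.

   For the lower bound, polarizing <psi|P'|psi> = 1 between orthogonal product vectors
   sharing a factor shows that the e_0 (x) e_k are P'-orthonormal, so rank P' >= M.  For
   odd M the matrix C_ij = <e_0 e_i|P'|e_1 e_j> is antisymmetric, hence singular, and a
   unit vector b in its kernel adds e_1 (x) b to that P'-orthonormal family. *)

Local Notation idx i j := (mxtens_index (i, j)).

Lemma eq_mxtens_index m n (i k : 'I_m) (j l : 'I_n) :
  (idx i j == idx k l) = (i == k) && (j == l).
Proof. by rewrite (can_eq (@mxtens_indexK m n)) xpair_eqE. Qed.

Lemma sum_mxtens (V : nmodType) m n (F : 'I_(m * n) -> V) :
  \sum_(r < m * n) F r = \sum_(i < m) \sum_(j < n) F (idx i j).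
Proof.
rewrite pair_big /= (reindex (@mxtens_index m n)) /=; last first.
  by exists (@mxtens_unindex m n) => r _; rewrite (mxtens_indexK, mxtens_unindexK).
by apply: eq_bigr => -[i j].
Qed.

Lemma sum_eq_natr (R : pzSemiRingType) n (i : 'I_n) (F : 'I_n -> R) :
  \sum_(k < n) (k == i)%:R * F k = F i.
Proof.
rewrite (bigD1 i) //= eqxx mul1r big1 ?addr0 // => k /negbTE->.
exact: mul0r.
Qed.

Lemma tens_colE (R : pzRingType) m n (a : 'cV[R]_m) (b : 'cV[R]_n) i j :
  (a *t b : 'cV_(m * n)) (idx i j) 0 = a i 0 * b j 0.
Proof. by rewrite mxE mxtens_indexK /=; congr (a i _ * b j _); apply: val_inj. Qed.

Lemma tensmx_linear_l (R : comPzRingType) m n p q (s t : R)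
    (A A' : 'M[R]_(m, n)) (B : 'M[R]_(p, q)) :
  (s *: A + t *: A') *t B = s *: (A *t B) + t *: (A' *t B).
Proof. by apply/matrixP => r c; rewrite !mxE mulrDl -!mulrA. Qed.

Lemma tensmx_linear_r (R : comPzRingType) m n p q (s t : R)
    (A : 'M[R]_(m, n)) (B B' : 'M[R]_(p, q)) :
  A *t (s *: B + t *: B') = s *: (A *t B) + t *: (A *t B').
Proof. by apply/matrixP => r c; rewrite !mxE mulrDr ![A _ _ * (_ * _)]mulrCA. Qed.

Lemma tens_col_expand (R : comPzRingType) m n (a : 'cV[R]_m) (b : 'cV[R]_n) :
  (a *t b : 'cV_(m * n)) =
  \sum_(j < n) b j 0 *: (a *t (delta_mx j 0 : 'cV_n) : 'cV_(m * n)).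
Proof.
apply/matrixP => r c; case: (mxtens_indexP r) => i j; rewrite [c]ord1 summxE.
rewrite (tens_colE a) (bigD1 j) //= big1 ?addr0 => [|l l_j];
  rewrite mxE (tens_colE a) mxE.
  by rewrite !eqxx mulr1 mulrC.
by rewrite eq_sym (negbTE l_j) mulr0 mulr0.
Qed.

Section Flip.
Variables (R : comNzRingType) (M : nat).
Local Notation F := (flip R M).

Lemma flipE i j k l : F (idx i j) (idx k l) = ((i == l) && (j == k))%:R.
Proof.
rewrite /flip summxE.
under eq_bigr do rewrite summxE.
under eq_bigr do under eq_bigr do rewrite tensmxE !mxE.
rewrite (bigD1 i) //= [X in _ + X]big1 ?addr0 => [|a ha]; last first.
  by apply: big1 => b _; rewrite eq_sym (negbTE ha) mul0r.
rewrite (bigD1 k) //= [X in _ + X]big1 ?addr0 => [|b hb]; last first.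
  by rewrite eq_sym (negbTE hb) andbF mul0r.
by rewrite !eqxx mul1r [l == i]eq_sym [j == k]eq_sym andbC.
Qed.

Lemma flipT : F^T = F.
Proof.
apply/matrixP => r c; case: (mxtens_indexP r) => i j; case: (mxtens_indexP c) => k l.
by rewrite mxE !flipE andbC [k == j]eq_sym [l == i]eq_sym.
Qed.

Lemma flip_mulmxE n (A : 'M[R]_(M * M, n)) i j c :
  (F *m A) (idx i j) c = A (idx j i) c.
Proof.
rewrite mxE sum_mxtens.
under eq_bigr => k _ do under eq_bigr => l _ do
  rewrite flipE andbC -mulnb natrM -mulrA [j == k]eq_sym [i == l]eq_sym.
under eq_bigr do rewrite -mulr_sumr sum_eq_natr.
exact: sum_eq_natr.
Qed.

Lemma flip_tens (a b : 'cV[R]_M) : F *m (a *t b) = b *t a.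
Proof.
apply/matrixP => r c; case: (mxtens_indexP r) => i j; case: (mxtens_indexP c) => k l.
by rewrite flip_mulmxE !tensmxE [k]ord1 [l]ord1 mulrC.
Qed.

Lemma flip_sqr : F *m F = 1%:M.
Proof.
apply/matrixP => r c; case: (mxtens_indexP r) => i j; case: (mxtens_indexP c) => k l.
by rewrite flip_mulmxE flipE !mxE eq_mxtens_index andbC.
Qed.

Lemma mxtrace_flip : \tr F = M%:R.
Proof.
rewrite /mxtrace sum_mxtens.
transitivity (\sum_(i < M) (1 : R)); last by rewrite sumr_const card_ord.
apply: eq_bigr => i _; rewrite -(sum_eq_natr i (fun=> 1)).
by apply: eq_bigr => j _; rewrite flipE [j == i]eq_sym andbb mulr1 eq_sym.
Qed.

Definition maxent : 'cV[R]_(M * M) :=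
  \sum_(j < M) ((delta_mx j 0 : 'cV_M) *t (delta_mx j 0 : 'cV_M)).

Lemma maxentE i j c : maxent (idx i j) c = (i == j)%:R.
Proof.
rewrite [c]ord1 summxE; under eq_bigr do rewrite tens_colE !mxE !andbT -natrM mulnb.
rewrite (bigD1 j) //= eqxx andbT big1 ?addr0 // => k.
by rewrite eq_sym => /negbTE ->; rewrite andbF.
Qed.

Lemma ptrans1_flip : ptrans1 F = maxent *m maxent^T.
Proof.
apply/matrixP => r c; case: (mxtens_indexP r) => i j; case: (mxtens_indexP c) => k l.
rewrite !mxE !mxtens_indexK /= flipE big_ord1 !mxE !maxentE.
by rewrite -natrM mulnb andbC eq_sym.
Qed.

Lemma maxent_dot : maxent^T *m maxent = (M%:R)%:M.
Proof.
apply/matrixP => a b; rewrite [a]ord1 [b]ord1 !mxE /= mulr1n sum_mxtens.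
transitivity (\sum_(i < M) (1 : R)); last by rewrite sumr_const card_ord.
apply: eq_bigr => i _; rewrite -(sum_eq_natr i (fun=> 1)).
by apply: eq_bigr => j _; rewrite !mxE !maxentE -natrM mulnb andbb mulr1 eq_sym.
Qed.

Lemma flip_maxent : F *m maxent = maxent.
Proof. by rewrite mulmx_sumr; apply: eq_bigr => j _; rewrite flip_tens. Qed.

End Flip.

Lemma mxtrace_idem (R : fieldType) n (E : 'M[R]_n) :
  E *m E = E -> \tr E = (\rank E)%:R.
Proof.
move=> EE.
have BC : row_base E *m col_base E = 1%:M.
  apply: (row_full_inj (col_base_full E)); apply: (row_free_inj (row_base_free E)).
  rewrite mulmx1 mulmxA.
  transitivity ((col_base E *m row_base E) *m (col_base E *m row_base E)).
    by rewrite !mulmxA.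
  by rewrite mulmx_base EE.
by rewrite -{1}(mulmx_base E) mxtrace_mulC BC mxtrace1.
Qed.

Lemma idem_eq_of_mxtrace (R : numFieldType) n (E D : 'M[R]_n) :
  E *m E = E -> D *m D = D -> E *m D = D -> D *m E = D -> \tr E = \tr D -> E = D.
Proof.
move=> EE DD ED DE trED; apply/eqP; rewrite -subr_eq0 -mxrank_eq0 -(eqr_nat R).
rewrite -mxtrace_idem ?raddfB /= ?trED ?subrr //.
by rewrite !(mulmxBl, mulmxBr) EE ED DE DD subrr subr0.
Qed.

(* The %R matters: inside \rank, + would denote the sum of row spaces. *)
Lemma mxrank_scale_proj_add_outer (R : numFieldType) n (A : 'M[R]_n)
    (f : 'cV[R]_n) (c m : R) :
  c != 0 -> m != 0 -> A *m A = A -> A^T = A -> A *m f = 0 -> f^T *m f = m%:M ->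
  \rank (c *: A + f *m f^T)%R = (\rank A).+1.
Proof.
move=> c0 m0 AA AT Af ff.
have Aff : A *m (f *m f^T) = 0 by rewrite mulmxA Af mul0mx.
have ffA : (f *m f^T) *m A = 0 by rewrite -mulmxA -AT -trmx_mul Af trmx0 mulmx0.
have ffff : (f *m f^T) *m (f *m f^T) = m *: (f *m f^T).
  by rewrite mulmxA -(mulmxA f) ff mul_mx_scalar scalemxAl.
have expand (a b a' b' : R) :
    (a *: A + b *: (f *m f^T)) *m (a' *: A + b' *: (f *m f^T)) =
    (a * a') *: A + (b * b' * m) *: (f *m f^T).
  rewrite mulmxDl !mulmxDr -!scalemxAl -!scalemxAr AA Aff ffA ffff.
  by rewrite !scaler0 addr0 add0r !scalerA.
rewrite -[f *m f^T]scale1r; set P := (c *: A + _)%R.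
pose E := 1 *: A + m^-1 *: (f *m f^T).
have PE : P *m E = P by rewrite /P /E expand mulr1 mul1r mulVf.
have EP : P *m (c^-1 *: A + (m^-1 * m^-1) *: (f *m f^T)) = E.
  by rewrite /P /E expand mulfV // mul1r -mulrA mulVf // mulr1.
have EE : E *m E = E by rewrite /E expand mulr1 -mulrA mulVf // mulr1.
have -> : \rank P = \rank E.
  apply/eqP; rewrite eqn_leq; apply/andP; split.
    by have := mxrankM_maxr P E; rewrite PE.
  by have := mxrankM_maxl P (c^-1 *: A + (m^-1 * m^-1) *: (f *m f^T)); rewrite EP.
apply/eqP; rewrite -(eqr_nat R) -mxtrace_idem // -addn1 natrD -mxtrace_idem //.
by rewrite /E mxtraceD !mxtraceZ mul1r mxtrace_mulC ff mxtrace_scalar mulr1n mulVf.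
Qed.

Lemma half_sqr_subE (R : numFieldType) (M : nat) :
  ((M * M - M) %/ 2)%:R = 2^-1 * ((M * M)%:R - M%:R) :> R.
Proof.
have le_M_sqr : (M <= M * M)%N by case: M => // n; rewrite leq_pmulr.
have even_sub : ~~ odd (M * M - M) by rewrite oddB // oddM andbb addbb.
apply: (@mulIf _ 2%:R); first by rewrite pnatr_eq0.
by rewrite -natrM divn2 muln2 even_halfK // natrB // mulrC mulrA mulfV ?pnatr_eq0 ?mul1r.
Qed.

Section AntisymmetricProjector.
Variables (R : numFieldType) (M : nat).
Local Notation F := (flip R M).
Local Notation Phi := (maxent R M).

Definition asym_proj : 'M[R]_(M * M) := 2^-1 *: (1%:M - F).
Local Notation A := asym_proj.

Lemma asym_proj_idem : A *m A = A.
Proof.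
have sqr_1subF : (1%:M - F) *m (1%:M - F) = 2%:R *: (1%:M - F).
  rewrite mulmxBl !mulmxBr !mul1mx mulmx1 flip_sqr scaler_nat mulr2n.
  by rewrite opprB addrA.
rewrite /A -scalemxAl -scalemxAr scalerA sqr_1subF scalerA -mulrA mulVf ?pnatr_eq0 //.
by rewrite mulr1.
Qed.

Lemma trmx_asym_proj : A^T = A.
Proof. by rewrite /A linearZ /= linearB /= trmx1 flipT. Qed.

Lemma asym_proj_maxent : A *m Phi = 0.
Proof. by rewrite /A -scalemxAl mulmxBl mul1mx flip_maxent subrr scaler0. Qed.

Lemma mxtrace_asym_proj : \tr A = ((M * M - M) %/ 2)%:R.
Proof. by rewrite half_sqr_subE mxtraceZ raddfB /= mxtrace1 mxtrace_flip. Qed.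

Lemma Pmat_asym_proj : Pmat R M = 2%:R *: A + Phi *m Phi^T.
Proof.
by rewrite /Pmat /A scalerA mulfV ?pnatr_eq0 // scale1r -ptrans1_flip.
Qed.

Lemma mxrank_Pmat : (0 < M)%N -> \rank (Pmat R M) = (1 + (M * M - M) %/ 2)%N.
Proof.
move=> M_gt0; rewrite Pmat_asym_proj (@mxrank_scale_proj_add_outer _ _ _ _ _ M%:R).
- rewrite add1n; congr _.+1; apply/eqP.
  by rewrite -(eqr_nat R) -mxtrace_idem ?asym_proj_idem // mxtrace_asym_proj.
- by rewrite pnatr_eq0.
- by rewrite pnatr_eq0 -lt0n.
- exact: asym_proj_idem.
- exact: trmx_asym_proj.
- exact: asym_proj_maxent.
- exact: maxent_dot.
Qed.

End AntisymmetricProjector.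

Section TensorVectorization.
Variables (R : comNzRingType) (M : nat).

Definition mxtens_vec (X : 'M[R]_M) : 'cV[R]_(M * M) :=
  \col_r X (mxtens_unindex r).1 (mxtens_unindex r).2.

Lemma mxtens_vecE X i j c : mxtens_vec X (idx i j) c = X i j.
Proof. by rewrite mxE mxtens_indexK. Qed.

Lemma flip_mxtens_vec X : flip R M *m mxtens_vec X = mxtens_vec X^T.
Proof.
apply/matrixP => r c; case: (mxtens_indexP r) => i j.
by rewrite flip_mulmxE !mxtens_vecE mxE.
Qed.

Lemma mxtens_vec_dot X Y : (mxtens_vec X)^T *m mxtens_vec Y = (\tr (X *m Y^T))%:M.
Proof.
apply/matrixP => a b; rewrite [a]ord1 [b]ord1 !mxE /= mulr1n sum_mxtens.
apply: eq_bigr => i _; rewrite mxE; apply: eq_bigr => j _.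
by rewrite !mxE !mxtens_indexK.
Qed.

Lemma mxtens_vec_outerE X Y i j k l :
  (mxtens_vec X *m (mxtens_vec Y)^T) (idx i j) (idx k l) = X i j * Y k l.
Proof. by rewrite !mxE big_ord1 !mxE !mxtens_indexK. Qed.

End TensorVectorization.

Lemma asym_proj_mxtens_vec (R : numFieldType) M (X : 'M[R]_M) :
  X^T = - X -> asym_proj R M *m mxtens_vec X = mxtens_vec X.
Proof.
move=> X_skew; rewrite /asym_proj -scalemxAl mulmxBl mul1mx flip_mxtens_vec X_skew.
have -> : mxtens_vec (- X) = - mxtens_vec X by apply/matrixP => r c; rewrite !mxE.
rewrite opprK -mulr2n -scaler_nat scalerA mulVf ?pnatr_eq0 //.
exact: scale1r.
Qed.

Section SkewOrthonormalFamily.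
Variables (R : numFieldType) (M K : nat) (G : 'I_K -> 'M[R]_M).
Hypothesis K_dim : K = ((M * M - M) %/ 2)%N.
Hypothesis G_skew : forall g, (G g)^T = - G g.
Hypothesis G_orth : forall g h, g != h -> \tr (G g *m (G h)^T) = 0.
Hypothesis G_norm : forall g, \tr (G g *m (G g)^T) = 2.
Local Notation A := (asym_proj R M).
Local Notation v g := (mxtens_vec (G g)).

Lemma sum_outer_mxtens_vec : \sum_g v g *m (v g)^T = 2%:R *: A.
Proof.
set T := \sum_g _.
have two_unit : (2%:R : R) != 0 by rewrite pnatr_eq0.
have AT : A *m T = T.
  by rewrite mulmx_sumr; apply: eq_bigr => g _; rewrite mulmxA asym_proj_mxtens_vec.
have T_sym : T^T = T.
  by rewrite /T raddf_sum /=; apply: eq_bigr => g _; rewrite trmx_mul trmxK.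
have TA : T *m A = T by rewrite -{1}T_sym -trmx_asym_proj -trmx_mul AT T_sym.
have TT : T *m T = 2%:R *: T.
  rewrite mulmx_suml scaler_sumr; apply: eq_bigr => g _.
  rewrite mulmx_sumr (bigD1 g) //= big1 ?addr0 => [|h hg]; last first.
    rewrite mulmxA -(mulmxA _ _ (v h)) mxtens_vec_dot G_orth 1?eq_sym //.
    by rewrite mul_mx_scalar scale0r mul0mx.
  by rewrite mulmxA -(mulmxA _ _ (v g)) mxtens_vec_dot G_norm mul_mx_scalar -scalemxAl.
have trT : \tr T = 2%:R * K%:R.
  rewrite raddf_sum /=.
  under eq_bigr do rewrite mxtrace_mulC mxtens_vec_dot G_norm mxtrace_scalar mulr1n.
  by rewrite sumr_const card_ord mulr_natr.
suff -> : A = 2^-1 *: T by rewrite scalerA mulfV // scale1r.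
apply: idem_eq_of_mxtrace.
- exact: asym_proj_idem.
- by rewrite -scalemxAl -scalemxAr TT !scalerA -mulrA mulVf // mulr1.
- by rewrite -scalemxAr AT.
- by rewrite -scalemxAl TA.
- by rewrite mxtrace_asym_proj mxtraceZ trT mulrA mulVf // mul1r K_dim.
Qed.

Lemma Pmat_sum_tens : Pmat R M = 1%:M + \sum_g (G g *t G g).
Proof.
apply/matrixP => r c; case: (mxtens_indexP r) => i j; case: (mxtens_indexP c) => k l.
have := congr1 (fun X : 'M[R]_(M * M) => X (idx i k) (idx j l)) sum_outer_mxtens_vec.
rewrite summxE; under eq_bigr do rewrite mxtens_vec_outerE.
move=> sumE; rewrite [in RHS]mxE summxE; under eq_bigr do rewrite tensmxE.
rewrite sumE /Pmat ptrans1_flip !mxE big_ord1 !mxE !maxentE !flipE !eq_mxtens_index.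
rewrite mulrA mulfV ?pnatr_eq0 // mul1r -natrM mulnb [k == j]eq_sym.
by rewrite addrAC -addrA.
Qed.

End SkewOrthonormalFamily.

Section Forms.
Variable R : comNzRingType.

Definition vdot n (u v : 'cV[R]_n) : R := (u^T *m v) 0 0.
Definition mxform n (P : 'M[R]_n) (u v : 'cV[R]_n) : R := (u^T *m P *m v) 0 0.

Lemma vdotC n (u v : 'cV[R]_n) : vdot u v = vdot v u.
Proof. by rewrite /vdot -[u^T *m v]trmxK trmx_mul trmxK mxE. Qed.

Lemma vdot_delta n (a : 'cV[R]_n) j : vdot a (delta_mx j 0) = a j 0.
Proof.
rewrite /vdot mxE (bigD1 j) //= big1 ?addr0 => [|k /negbTE k_j].
  by rewrite !mxE !eqxx mulr1.
by rewrite !mxE k_j mulr0.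
Qed.

Lemma vdot_delta_delta n (i j : 'I_n) :
  vdot (delta_mx i 0) (delta_mx j 0) = (i == j)%:R.
Proof. by rewrite vdot_delta mxE andbT eq_sym. Qed.

Lemma vdot_unitP n (a : 'cV[R]_n) : a^T *m a = 1%:M <-> vdot a a = 1.
Proof.
split=> a_unit; first by rewrite /vdot a_unit mxE.
by rewrite [LHS]mx11_scalar -/(vdot a a) a_unit.
Qed.

Lemma vdot_tens m n (a c : 'cV[R]_m) (b d : 'cV[R]_n) :
  vdot (a *t b) (c *t d) = vdot a c * vdot b d.
Proof.
rewrite /vdot !mxE sum_mxtens mulr_suml; apply: eq_bigr => i _.
rewrite mxE mulr_sumr; apply: eq_bigr => j _.
by rewrite [_^T _ _]mxE (tens_colE a) (tens_colE c) mxE mulrACA.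
Qed.

Lemma mxformE n (P : 'M[R]_n) u v : mxform P u v = vdot u (P *m v).
Proof. by rewrite /mxform /vdot mulmxA. Qed.

Lemma mxform_sym n (P : 'M[R]_n) u v : P^T = P -> mxform P u v = mxform P v u.
Proof.
move=> P_sym; have -> : mxform P u v = (u^T *m P *m v)^T 0 0 by rewrite mxE.
by rewrite !trmx_mul trmxK P_sym mulmxA.
Qed.

Lemma mxform_linear_l n (P : 'M[R]_n) s t u u' v :
  mxform P (s *: u + t *: u') v = s * mxform P u v + t * mxform P u' v.
Proof.
rewrite /mxform linearD /= !linearZ /= !mulmxDl.
by rewrite -!(scalemxAl s) -!(scalemxAl t) !mxE.
Qed.

Lemma mxform_linear_r n (P : 'M[R]_n) s t u v v' :
  mxform P u (s *: v + t *: v') = s * mxform P u v + t * mxform P u v'.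
Proof. by rewrite /mxform mulmxDr -!scalemxAr !mxE. Qed.

Lemma mxformD n (P Q : 'M[R]_n) u v : mxform (P + Q) u v = mxform P u v + mxform Q u v.
Proof. by rewrite /mxform mulmxDr mulmxDl mxE. Qed.

Lemma mxformB n (P Q : 'M[R]_n) u v : mxform (P - Q) u v = mxform P u v - mxform Q u v.
Proof. by rewrite /mxform mulmxBr mulmxBl !mxE. Qed.

Lemma mxformZ n a (P : 'M[R]_n) u v : mxform (a *: P) u v = a * mxform P u v.
Proof. by rewrite /mxform -scalemxAr -scalemxAl mxE. Qed.

Lemma mxform1 n (u v : 'cV[R]_n) : mxform 1%:M u v = vdot u v.
Proof. by rewrite /mxform mulmx1. Qed.

Lemma mxform_sumr n (P : 'M[R]_n) u m (d : 'I_m -> R) (v : 'I_m -> 'cV[R]_n) :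
  mxform P u (\sum_j d j *: v j) = \sum_j d j * mxform P u (v j).
Proof.
rewrite /mxform mulmx_sumr summxE; apply: eq_bigr => j _.
by rewrite -scalemxAr mxE.
Qed.

Lemma mxform_gram m n (B : 'M[R]_(m, n)) x :
  mxform (B^T *m B) x x = vdot (B *m x) (B *m x).
Proof. by rewrite mxformE /vdot trmx_mul !mulmxA. Qed.

Lemma mxform_outer n (f u v : 'cV[R]_n) :
  mxform (f *m f^T) u v = vdot u f * vdot f v.
Proof. by rewrite /mxform /vdot mulmxA -(mulmxA _ f^T) mxE big_ord1. Qed.

End Forms.

Lemma vdot_ge0 (R : realDomainType) n (u : 'cV[R]_n) : 0 <= vdot u u.
Proof. by rewrite /vdot mxE; apply: sumr_ge0 => i _; rewrite mxE -expr2 sqr_ge0. Qed.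

Lemma vdot_eq0 (R : realDomainType) n (u : 'cV[R]_n) : (vdot u u == 0) = (u == 0).
Proof.
apply/idP/eqP => [|->]; last by rewrite /vdot trmx0 mul0mx mxE.
rewrite /vdot mxE psumr_eq0 => [/allP u0|i _]; last by rewrite mxE -expr2 sqr_ge0.
apply/matrixP => i j; rewrite [j]ord1 mxE.
by have /implyP/(_ isT) := u0 i (mem_index_enum i); rewrite mxE -expr2 sqrf_eq0 => /eqP.
Qed.

Lemma vdot_maxent (R : comNzRingType) M (a b : 'cV[R]_M) :
  vdot (a *t b) (maxent R M) = vdot a b.
Proof.
rewrite /vdot !mxE sum_mxtens; apply: eq_bigr => i _.
under eq_bigr do rewrite [_^T _ _]mxE (tens_colE a) maxentE mulrC eq_sym.
by rewrite sum_eq_natr mxE.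
Qed.

Lemma trmx_Pmat (R : comNzRingType) M : (Pmat R M)^T = Pmat R M.
Proof. by rewrite /Pmat ptrans1_flip !linearD /= linearN /= trmx1 flipT trmx_mul trmxK. Qed.

Lemma Pmat_psd (R : realFieldType) M : psdmx (Pmat R M).
Proof.
split=> [|x]; first exact: trmx_Pmat.
have -> : Pmat R M = 2%:R *: ((asym_proj R M)^T *m asym_proj R M)
                     + (maxent R M)^T^T *m (maxent R M)^T.
  by rewrite trmx_asym_proj asym_proj_idem trmxK Pmat_asym_proj.
rewrite -/(mxform _ x x) mxformD mxformZ !mxform_gram.
by rewrite addr_ge0 ?mulr_ge0 ?vdot_ge0.
Qed.

Lemma Pmat_unit_on_products (R : comNzRingType) M : unit_on_products (Pmat R M).
Proof.
move=> a b /vdot_unitP a_unit /vdot_unitP b_unit.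
change ((a *t b : 'cV_(M * M))^T *m Pmat R M *m (a *t b : 'cV_(M * M)) = 1%:M :> 'M_1).
rewrite [LHS]mx11_scalar -/(mxform _ _ _); congr _%:M.
rewrite /Pmat ptrans1_flip mxformD mxformB mxform1 mxform_outer mxformE flip_tens.
rewrite !vdot_tens a_unit b_unit mul1r [vdot (maxent R M) _]vdotC vdot_maxent.
by rewrite [vdot b a]vdotC subrK.
Qed.

Lemma det_skew_odd (R : numDomainType) n (A : 'M[R]_n) :
  odd n -> A^T = - A -> \det A = 0.
Proof.
move=> n_odd A_skew; have /eqP : \det A = - \det A.
  by rewrite -{1}det_tr A_skew -scaleN1r detZ -signr_odd n_odd expr1 mulN1r.
by rewrite -addr_eq0 -mulr2n mulrn_eq0 => /eqP.
Qed.

Lemma exists_unit_kernel_vector (R : rcfType) n (A : 'M[R]_n) :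
  \det A = 0 -> exists2 b : 'cV[R]_n, vdot b b = 1 & A *m b = 0.
Proof.
rewrite -det_tr => /eqP/det0P[v v_neq0 vA].
have Av : A *m v^T = 0 by rewrite -[A]trmxK -trmx_mul vA trmx0.
have s_gt0 : 0 < vdot v^T v^T by rewrite lt_def vdot_eq0 trmx_eq0 v_neq0 vdot_ge0.
exists ((Num.sqrt (vdot v^T v^T))^-1 *: v^T); last by rewrite -scalemxAr Av scaler0.
rewrite /vdot !linearZ /= -scalemxAl.
rewrite [in LHS]mxE [X in _ * X]mxE -/(vdot _ _).
by rewrite mulrA -invfM -expr2 sqr_sqrtr ?ltW // mulVf ?gt_eqF.
Qed.

Lemma mxrank_ge_orthonormal (R : fieldType) (I : finType) n (P : 'M[R]_n)
    (w : I -> 'cV[R]_n) :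
  (forall c c', mxform P (w c) (w c') = (c == c')%:R) -> (#|I| <= \rank P)%N.
Proof.
move=> w_orthonormal; pose Z : 'M[R]_(n, #|I|) := \matrix_(r, c) w (enum_val c) r 0.
have ZPZ : Z^T *m P *m Z = 1%:M.
  apply/matrixP => c c'.
  rewrite [RHS]mxE -(inj_eq enum_val_inj) -w_orthonormal /mxform !mxE.
  apply: eq_bigr => s _; rewrite !mxE; congr (_ * _).
  by apply: eq_bigr => r _; rewrite !mxE.
have := mxrankM_maxl (Z^T *m P) Z; rewrite ZPZ mxrank1 => le_I_ZP.
exact: leq_trans le_I_ZP (mxrankM_maxr _ _).
Qed.

Section Polarization.
Variables (R : realFieldType) (n : nat) (P : 'M[R]_n).
Hypothesis P_sym : P^T = P.

(* (3/5, 4/5) is a rational point of the unit circle, so no square roots are needed. *)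
Definition pythag_comb (u v : 'cV[R]_n) := 3%:R / 5%:R *: u + 4%:R / 5%:R *: v.

Lemma mxform_pythag_comb u v :
  mxform P (pythag_comb u v) (pythag_comb u v) =
  9%:R / 25%:R * mxform P u u + 24%:R / 25%:R * mxform P u v
  + 16%:R / 25%:R * mxform P v v.
Proof.
rewrite /pythag_comb mxform_linear_l !mxform_linear_r (mxform_sym v u P_sym).
by field.
Qed.

Lemma mxform_orth_of_pythag_comb u v :
  mxform P u u = 1 -> mxform P v v = 1 ->
  mxform P (pythag_comb u v) (pythag_comb u v) = 1 -> mxform P u v = 0.
Proof. by rewrite mxform_pythag_comb => -> ->; lra. Qed.

End Polarization.

Lemma vdot_pythag_comb (R : realFieldType) n (a a' : 'cV[R]_n) :
  vdot a a = 1 -> vdot a' a' = 1 -> vdot a a' = 0 ->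
  vdot (pythag_comb a a') (pythag_comb a a') = 1.
Proof.
rewrite -!mxform1 mxform_pythag_comb ?trmx1 // => -> -> ->.
by field.
Qed.

Section ProductNormalizedForms.
Variables (R : realFieldType) (M : nat) (P : 'M[R]_(M * M)).
Hypotheses (P_sym : P^T = P) (P_unit : unit_on_products P).
Local Notation e i := (delta_mx i 0 : 'cV[R]_M).

Lemma mxform_tens_unit (a b : 'cV[R]_M) :
  vdot a a = 1 -> vdot b b = 1 -> mxform P (a *t b) (a *t b) = 1.
Proof.
move=> /vdot_unitP a_unit /vdot_unitP b_unit.
have ab_unit : (a *t b : 'cV_(M * M))^T *m P *m (a *t b : 'cV_(M * M)) = 1%:M :> 'M_1.
  exact: P_unit.
by rewrite /mxform ab_unit mxE.
Qed.

Lemma mxform_tens_orth_l (a a' b : 'cV[R]_M) :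
  vdot a a = 1 -> vdot a' a' = 1 -> vdot a a' = 0 -> vdot b b = 1 ->
  mxform P (a *t b) (a' *t b) = 0.
Proof.
move=> a_unit a'_unit aa' b_unit.
apply: mxform_orth_of_pythag_comb; rewrite ?mxform_tens_unit //.
by rewrite /pythag_comb -(tensmx_linear_l _ _ a a' b) mxform_tens_unit ?vdot_pythag_comb.
Qed.

Lemma mxform_tens_orth_r (a b b' : 'cV[R]_M) :
  vdot a a = 1 -> vdot b b = 1 -> vdot b' b' = 1 -> vdot b b' = 0 ->
  mxform P (a *t b) (a *t b') = 0.
Proof.
move=> a_unit b_unit b'_unit bb'.
apply: mxform_orth_of_pythag_comb; rewrite ?mxform_tens_unit //.
by rewrite /pythag_comb -(tensmx_linear_r _ _ a b b') mxform_tens_unit ?vdot_pythag_comb.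
Qed.

Lemma mxform_delta_tens_gram k c c' :
  mxform P (e k *t e c) (e k *t e c') = (c == c')%:R.
Proof.
have [<-|c_c'] := eqVneq c c'.
  by rewrite mxform_tens_unit ?vdot_delta_delta ?eqxx.
by rewrite mxform_tens_orth_r ?vdot_delta_delta ?eqxx ?(negbTE c_c').
Qed.

Lemma mxform_delta_tens_skew k0 k1 i j : k0 != k1 ->
  mxform P (e k0 *t e i) (e k1 *t e j) = - mxform P (e k0 *t e j) (e k1 *t e i).
Proof.
move=> k0_k1.
have e_unit l : vdot (e l) (e l) = 1 by rewrite vdot_delta_delta eqxx.
have e_orth l l' : l != l' -> vdot (e l) (e l') = 0.
  by rewrite vdot_delta_delta => /negbTE ->.
have diag l : mxform P (e k0 *t e l) (e k1 *t e l) = 0.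
  exact: mxform_tens_orth_l (e_unit k0) (e_unit k1) (e_orth _ _ k0_k1) (e_unit l).
have [<-|i_j] := eqVneq i j; first by rewrite diag oppr0.
have := mxform_tens_orth_l (e_unit k0) (e_unit k1) (e_orth _ _ k0_k1)
  (vdot_pythag_comb (e_unit i) (e_unit j) (e_orth _ _ i_j)).
rewrite /pythag_comb !tensmx_linear_r.
by rewrite mxform_linear_l !mxform_linear_r !diag; lra.
Qed.

Lemma mxrank_ge_dim_of_product_normalized (k : 'I_M) : (M <= \rank P)%N.
Proof.
rewrite -[M in (M <= _)%N]card_ord.
exact: mxrank_ge_orthonormal (mxform_delta_tens_gram k).
Qed.

End ProductNormalizedForms.

Lemma mxrank_ge_odd_dim_of_product_normalized (R : rcfType) M (P : 'M[R]_(M * M))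
    (k0 k1 : 'I_M) :
  P^T = P -> unit_on_products P -> k0 != k1 -> odd M -> (M.+1 <= \rank P)%N.
Proof.
move=> P_sym P_unit k0_k1 M_odd.
pose e i := delta_mx i 0 : 'cV[R]_M.
pose C : 'M[R]_M := \matrix_(i, j) mxform P (e k0 *t e i) (e k1 *t e j).
have C_skew : C^T = - C.
  by apply/matrixP => i j; rewrite !mxE mxform_delta_tens_skew.
have [b b_unit Cb] := exists_unit_kernel_vector (det_skew_odd M_odd C_skew).
pose w (c : option 'I_M) := if c is Some k then e k0 *t e k else e k1 *t b.
have orth_b k : mxform P (e k0 *t e k) (e k1 *t b) = 0.
  have := congr1 (fun v : 'cV[R]_M => v k 0) Cb; rewrite !mxE => <-.
  rewrite [e k1 *t b]tens_col_expand mxform_sumr; apply: eq_bigr => j _.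
  by rewrite mxE mulrC.
apply: leq_trans (mxrank_ge_orthonormal (w := w) _); first by rewrite card_option card_ord.
case=> [k|] [k'|] /=.
- exact: mxform_delta_tens_gram.
- exact: orth_b.
- by rewrite (mxform_sym _ _ P_sym) orth_b.
- by rewrite mxform_tens_unit // vdot_delta_delta eqxx.
Qed.

Lemma mxrank_ge_small_dim_of_product_normalized (R : rcfType) M (P : 'M[R]_(M * M)) :
  (2 <= M)%N -> (M <= 3)%N -> psdmx P -> unit_on_products P ->
  (1 + (M * M - M) %/ 2 <= \rank P)%N.
Proof.
case: M P => [|[|[|[|n]]]] // P _ _ [P_sym _] P_unit.
- exact: (mxrank_ge_dim_of_product_normalized P_sym P_unit 0).
- exact: (@mxrank_ge_odd_dim_of_product_normalized _ _ _ 0 1 P_sym P_unit).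
Qed.

Theorem lemma1 (R : realType) (M : nat) (hM : (2 <= M)%N)
    (G : 'I_((M * M - M) %/ 2) -> 'M[R]_M)
    (hGanti : forall g, (G g)^T = - G g)
    (hGorth : forall g h, g != h -> \tr (G g *m (G h)^T) = 0)
    (hGnorm : forall g, \tr (G g *m (G g)^T) = 2) :
  Pmat R M = 1%:M + \sum_(g < (M * M - M) %/ 2) (G g *t G g) /\
  psdmx (Pmat R M) /\
  unit_on_products (Pmat R M) /\
  \rank (Pmat R M) = (1 + (M * M - M) %/ 2)%N /\
  ((M <= 3)%N ->
     forall P' : 'M[R]_(M * M), psdmx P' -> unit_on_products P' ->
       (\rank (Pmat R M) <= \rank P')%N).
Proof.
have M_gt0 : (0 < M)%N by apply: leq_trans hM.
split; first exact: (Pmat_sum_tens erefl hGanti hGorth hGnorm).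
split; first exact: Pmat_psd.
split; first exact: Pmat_unit_on_products.
split; first exact: mxrank_Pmat.
move=> M_le3 P' P'_psd P'_unit; rewrite mxrank_Pmat //.
exact: mxrank_ge_small_dim_of_product_normalized.
Qed.
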